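(* Consider a financial network (as described in the context) whose cross-holding graph is acyclic, and suppose one entry (edge weight) of the cross-holding matrix $C$ changes by at most $\epsilon$, producing a network whose cross-holding graph is also acyclic, with the asset holdings $D$ and asset prices $\vec p$ unchanged. Then no institution's market value changes by more than $\epsilon\|\vec p\|_1$.
   Context: Model: there are $n$ financial institutions and $m$ underlying assets; asset $k$ has price $p_k\ge 0$. $D_{ik}\ge 0$ is the fraction of asset $k$ owned by institution $i$ (so $\sum_i D_{ik}\le 1$ for each $k$). $C=(C_{ij})$ is an $n\times n$ nonnegative matrix, $C_{ij}$ being the fraction of institution $j$ owned by institution $i$, with $C_{ii}=0$. The self-holding of institution $j$ is $\hat C_{jj}=1-\sum_i C_{ij}$, assumed to satisfy $\hat C_{jj}>0$; $\hat C$ is the diagonal matrix with these entries. The equity valuation is $\vec V=(I-C)^{-1}D\vec p$ (the solution of $\vec V=D\vec p+C\vec V$), and the market valuation is $\vec v=\hat C\vec V=\hat C(I-C)^{-1}D\vec p$; $v_i$ is the market value of institution $i$. The cross-holding graph is the directed graph with an edge from $j$ to $i$ whenever $C_{ij}>0$. *)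

From mathcomp Require Import all_boot all_order all_algebra.
Set Implicit Arguments. Unset Strict Implicit. Unset Printing Implicit Defensive.
Import Order.TTheory GRing.Theory Num.Theory.
Local Open Scope ring_scope.

Section Network.
Variables (R : realFieldType) (n m : nat).

Definition self_holding (C : 'M[R]_n) (j : 'I_n) : R := 1 - \sum_(i < n) C i j.

Definition hatC (C : 'M[R]_n) : 'M[R]_n := \matrix_(i, j) ((i == j)%:R * self_holding C j).

Definition valid_cross_holding (C : 'M[R]_n) : Prop :=
  (forall i j, 0 <= C i j) /\ (forall i, C i i = 0) /\ (forall j, 0 < self_holding C j).

Definition valid_holdings (D : 'M[R]_(n, m)) : Prop :=
  (forall i k, 0 <= D i k) /\ (forall k, \sum_(i < n) D i k <= 1).

Definition xgraph (C : 'M[R]_n) : rel 'I_n := fun j i => 0 < C i j.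

Definition acyclic_graph (C : 'M[R]_n) : Prop :=
  forall i j : 'I_n, xgraph C j i -> ~~ connect (xgraph C) i j.

Definition equity_val (C : 'M[R]_n) (D : 'M[R]_(n, m)) (p : 'cV[R]_m) : 'cV[R]_n :=
  invmx (1%:M - C) *m (D *m p).

Definition market_val (C : 'M[R]_n) (D : 'M[R]_(n, m)) (p : 'cV[R]_m) : 'cV[R]_n :=
  hatC C *m equity_val C D p.

Definition norm1 (p : 'cV[R]_m) : R := \sum_(k < m) `|p k 0|.

End Network.

From mathcomp Require Import all_boot all_order all_algebra.
From mathcomp Require Import ring lra.
Set Implicit Arguments. Unset Strict Implicit. Unset Printing Implicit Defensive.
Import Order.TTheory GRing.Theory Num.Theory.
Local Open Scope ring_scope.

(* Write M = (I - C)^-1. As C is nonnegative with column sums below 1, a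
   maximum principle along columns shows that M is nonnegative and, when the
   cross-holding graph is acyclic, that its entries are at most 1 (row b of M
   vanishes off the nodes reaching b, so M_bb = 1).  Moreover the columns of
   hatC M sum to 1, so its entries lie in [0, 1].  A single-entry change
   C' = C + d e_a e_b^T turns the resolvent identity M' = M + M' (C' - C) M into
     v'_i - v_i = d * V_b * ((hatC' M')_ia - [i = b]),
   where V = M D p is the old equity valuation, with 0 <= V_b <= ||p||_1. *)

Section Holdings.
Variables (R : realFieldType) (n m : nat) (D : 'M[R]_(n, m)) (p : 'cV[R]_m).
Hypothesis D_valid : valid_holdings D.

Lemma holdings_value_ge0 j : (forall k, 0 <= p k 0) -> 0 <= (D *m p) j 0.
Proof.
move=> p_ge0; rewrite mxE; apply: sumr_ge0 => k _.
by rewrite mulr_ge0 //; case: D_valid.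
Qed.

Lemma sum_holdings_value_le_norm1 : \sum_j (D *m p) j 0 <= norm1 p.
Proof.
case: D_valid => D_ge0 D_colsum.
under eq_bigr do rewrite mxE.
rewrite exchange_big /norm1; apply: ler_sum => k _.
rewrite -mulr_suml; apply: le_trans (ler_wpM2l _ (ler_norm _)) _.
  exact: sumr_ge0.
exact: ler_piMl.
Qed.

End Holdings.

Lemma valid_cross_holding_substochastic (R : realFieldType) n (C : 'M[R]_n) :
  valid_cross_holding C -> (forall i j, 0 <= C i j) /\ (forall j, \sum_i C i j < 1).
Proof.
case=> C_ge0 [_ sh_gt0]; split=> // j.
by rewrite -subr_gt0; exact: sh_gt0.
Qed.

Section Substochastic.
Variables (R : realFieldType) (n : nat) (C : 'M[R]_n).
Hypothesis C_ge0 : forall i j, 0 <= C i j.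
Hypothesis colsum_lt1 : forall j, \sum_i C i j < 1.

Lemma C_le0_eq0 i j : C i j <= 0 -> C i j = 0.
Proof. by move=> Cij_le0; apply/eqP; rewrite eq_le Cij_le0 C_ge0. Qed.

Lemma maximum_principle (z : 'I_n -> R) j :
  (forall i, 0 < C i j -> z i <= z j) -> z j <= \sum_i z i * C i j -> z j <= 0.
Proof.
move=> zmax zle.
have mix_le : \sum_i z i * C i j <= z j * \sum_i C i j.
  rewrite mulr_sumr; apply: ler_sum => i _.
  have [Cij_gt0|/C_le0_eq0->] := ltP 0 (C i j); last by rewrite !mulr0.
  by apply: ler_wpM2r; [exact: C_ge0 | exact: zmax].
have : z j * (1 - \sum_i C i j) <= 0.
  by rewrite mulrBr mulr1 subr_le0 (le_trans zle mix_le).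
by rewrite pmulr_lle0 // subr_gt0.
Qed.

Lemma unitmx_1BC : (1%:M - C) \in unitmx.
Proof.
rewrite unitmxE unitfE; apply/negP => /det0P [v v_neq0 v_ker].
have v_fix j : v 0 j = \sum_i v 0 i * C i j.
  have /matrixP/(_ 0 j) := v_ker.
  by rewrite mulmxBr mulmx1 !mxE => /eqP; rewrite subr_eq0 => /eqP.
have v_le0 j0 : `|v 0 j0| <= 0.
  have [j _ jmax] := @arg_maxP _ _ _ j0 predT (fun j => `|v 0 j|) isT.
  apply: le_trans (jmax j0 isT) _.
  apply: (@maximum_principle (fun k => `|v 0 k|)) => [i _|]; first exact: jmax.
  rewrite {1}v_fix; apply: le_trans (ler_norm_sum _ _ _) _.
  by apply: ler_sum => i _; rewrite normrM (ger0_norm (C_ge0 _ _)).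
case/eqP: v_neq0; apply/matrixP => i j; rewrite ord1 mxE.
by apply/normr0_eq0/eqP; rewrite eq_le normr_ge0 v_le0.
Qed.

Local Notation M := (invmx (1%:M - C)).

Lemma invmx_1BC_rowE b j : M b j = \sum_i M b i * C i j + (b == j)%:R.
Proof.
have /matrixP/(_ b j) := mulVmx unitmx_1BC.
by rewrite mulmxBr mulmx1 !mxE => <-; rewrite subrKC.
Qed.

Lemma invmx_1BC_ge0 b j : 0 <= M b j.
Proof.
have [k _ kmin] := @arg_minP _ _ _ j predT (fun k => M b k) isT.
apply: le_trans (kmin j isT); rewrite -oppr_le0.
apply: (@maximum_principle (fun k => - M b k)) => [i _|]; first by rewrite lerN2 kmin.
rewrite {1}invmx_1BC_rowE opprD (eq_bigr _ (fun i _ => mulNr _ _)) sumrN.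
by rewrite gerDl oppr_le0 ler0n.
Qed.

Lemma invmx_1BC_unreachable b j : ~~ connect (xgraph C) j b -> M b j = 0.
Proof.
move=> j_nreach.
have [k k_nreach kmax] :=
  @arg_maxP _ _ _ j (fun k => ~~ connect (xgraph C) k b) (fun k => M b k) j_nreach.
suff Mbk_le0 : M b k <= 0.
  by apply/eqP; rewrite eq_le invmx_1BC_ge0 (le_trans (kmax j j_nreach)).
apply: (@maximum_principle (fun k => M b k)) => [i Cik_gt0|].
  apply: kmax; apply: contra k_nreach; exact: connect_trans (connect1 Cik_gt0).
have bk_neq : (b == k) = false.
  by apply/negbTE; apply: contraNneq k_nreach => ->; rewrite connect0.
by rewrite {1}invmx_1BC_rowE bk_neq addr0.
Qed.

Lemma self_holding_rowE : \row_j self_holding C j = const_mx 1 *m (1%:M - C).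
Proof.
apply/rowP => j; rewrite mulmxBr mulmx1 !mxE /self_holding.
by congr (_ - _); apply: eq_bigr => i _; rewrite mxE mul1r.
Qed.

Lemma sum_self_holding_invmx_1BC a : \sum_i self_holding C i * M i a = 1.
Proof.
have := congr1 (fun A : 'rV_n => A 0 a) (congr1 (mulmx^~ M) self_holding_rowE).
rewrite -mulmxA mulmxV ?unitmx_1BC // mulmx1 !mxE.
by under eq_bigr do rewrite mxE.
Qed.

Lemma self_holding_invmx_1BC_bounds i a : 0 <= self_holding C i * M i a <= 1.
Proof.
have term_ge0 k : 0 <= self_holding C k * M k a.
  by rewrite mulr_ge0 ?invmx_1BC_ge0 // subr_ge0 ltW.
rewrite term_ge0 -[leRHS](sum_self_holding_invmx_1BC a) (bigD1 i) //= lerDl.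
exact: sumr_ge0.
Qed.

Hypothesis C_acyclic : acyclic_graph C.

Lemma invmx_1BC_diag b : M b b = 1.
Proof.
rewrite invmx_1BC_rowE eqxx big1 ?add0r // => i _.
have [Cib_gt0|/C_le0_eq0->] := ltP 0 (C i b); last by rewrite mulr0.
by rewrite invmx_1BC_unreachable ?mul0r // C_acyclic.
Qed.

Lemma invmx_1BC_le1 b j : M b j <= 1.
Proof.
have [k _ kmax] := @arg_maxP _ _ _ j predT (fun k => M b k) isT.
apply: le_trans (kmax j isT) _.
have [<-|bk_neq] := eqVneq b k; first by rewrite invmx_1BC_diag.
apply: le_trans ler01; apply: (@maximum_principle (fun k => M b k)) => [i _|].
  exact: kmax.
by rewrite {1}invmx_1BC_rowE (negPf bk_neq) addr0.
Qed.

Lemma equity_val_bounds m (D : 'M_(n, m)) (p : 'cV_m) b :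
  valid_holdings D -> (forall k, 0 <= p k 0) ->
  0 <= equity_val C D p b 0 <= norm1 p.
Proof.
move=> D_valid p_ge0; rewrite /equity_val mxE; apply/andP; split.
  by apply: sumr_ge0 => j _; rewrite mulr_ge0 ?invmx_1BC_ge0 ?holdings_value_ge0.
apply: le_trans (sum_holdings_value_le_norm1 p D_valid); apply: ler_sum => j _.
by rewrite ler_piMl ?invmx_1BC_le1 ?holdings_value_ge0.
Qed.

End Substochastic.

Lemma invmx_resolvent (R : comUnitRingType) n (A B : 'M[R]_n) :
  A \in unitmx -> B \in unitmx -> invmx B = invmx A + invmx B *m (A - B) *m invmx A.
Proof.
move=> A_unit B_unit.
by rewrite mulmxBr mulmxBl -mulmxA mulmxV // mulmx1 mulVmx // mul1mx subrKC.
Qed.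

Lemma mulmx_delta_mx_entry (R : pzRingType) m n p q (A : 'M[R]_(m, n))
    (y : 'M[R]_(p, q)) a b i k :
  (A *m delta_mx a b *m y) i k = A i a * y b k.
Proof.
rewrite -[delta_mx a b](mul_delta_mx (0 : 'I_1)) mulmxA -mulmxA -colE -rowE.
by rewrite mxE big_ord1 !mxE.
Qed.

Lemma single_entry_update (R : pzRingType) n (C C' : 'M[R]_n) a b :
  (forall i j, (i, j) != (a, b) -> C' i j = C i j) ->
  C' = C + (C' a b - C a b) *: delta_mx a b.
Proof.
move=> C'_off; apply/matrixP => i j; rewrite !mxE.
have [[-> ->]|ij_neq] := eqVneq (i, j) (a, b); first by rewrite !eqxx mulr1 subrKC.
by move: (ij_neq); rewrite xpair_eqE => /negPf->; rewrite mulr0 addr0 C'_off.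
Qed.

Lemma self_holding_add_delta (R : realFieldType) n (C : 'M[R]_n) d a b i :
  self_holding (C + d *: delta_mx a b) i = self_holding C i - (i == b)%:R * d.
Proof.
have delta_colsum : \sum_k (d *: delta_mx a b) k i = (i == b)%:R * d.
  rewrite (bigD1 a) //= big1 => [|k /negPf ka_neq]; rewrite !mxE ?ka_neq ?mulr0 //.
  by rewrite eqxx addr0 mulrC.
rewrite /self_holding; under eq_bigr do rewrite mxE.
by rewrite big_split /= delta_colsum opprD addrA.
Qed.

Lemma hatC_mulmx_entry (R : realFieldType) n k (C : 'M[R]_n) (y : 'M[R]_(n, k)) i l :
  (hatC C *m y) i l = self_holding C i * y i l.
Proof.
rewrite mxE (bigD1 i) //= big1 ?addr0 => [|j /negPf ji_neq].
  by rewrite mxE eqxx mul1r.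
by rewrite mxE eq_sym ji_neq !mul0r.
Qed.

Lemma market_val_add_delta (R : realFieldType) n m (C C' : 'M[R]_n)
    (D : 'M[R]_(n, m)) (p : 'cV[R]_m) a b d i :
  C' = C + d *: delta_mx a b ->
  (1%:M - C) \in unitmx -> (1%:M - C') \in unitmx ->
  market_val C' D p i 0 - market_val C D p i 0
    = d * equity_val C D p b 0 * (self_holding C' i * invmx (1%:M - C') i a - (i == b)%:R).
Proof.
move=> C'E unit_C unit_C'.
have equity_shift : equity_val C' D p i 0
    = equity_val C D p i 0 + d * invmx (1%:M - C') i a * equity_val C D p b 0.
  have C_diff : (1%:M - C) - (1%:M - C') = d *: delta_mx a b.
    by rewrite opprB addrC addrA subrK C'E addrC addKr.
  rewrite /equity_val {1}(invmx_resolvent unit_C unit_C') C_diff.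
  set y := invmx (1%:M - C) *m (D *m p).
  rewrite mulmxDl mxE -mulmxA -/y -scalemxAr -scalemxAl [X in _ + X = _]mxE.
  by rewrite mulmx_delta_mx_entry mulrA.
rewrite /market_val !hatC_mulmx_entry equity_shift.
have := self_holding_add_delta C d a b i; rewrite -C'E => ->.
by have [->|_] := eqVneq i b; rewrite ?mulr1n ?mulr0n; ring.
Qed.

Theorem corollary2 (R : realFieldType) (n m : nat)
    (C C' : 'M[R]_n) (D : 'M[R]_(n, m)) (p : 'cV[R]_m)
    (a b : 'I_n) (eps : R) :
  (forall k, 0 <= p k 0) ->
  valid_holdings D ->
  valid_cross_holding C -> acyclic_graph C ->
  valid_cross_holding C' -> acyclic_graph C' ->
  (forall i j, (i, j) != (a, b) -> C' i j = C i j) ->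
  `|C' a b - C a b| <= eps ->
  forall i, `|market_val C' D p i 0 - market_val C D p i 0| <= eps * norm1 p.
Proof.
move=> p_ge0 D_valid C_valid C_acyclic C'_valid _ C'_off d_le_eps i.
have [C_ge0 C_colsum] := valid_cross_holding_substochastic C_valid.
have [C'_ge0 C'_colsum] := valid_cross_holding_substochastic C'_valid.
rewrite (market_val_add_delta D p i (single_entry_update C'_off)) ?unitmx_1BC //.
have /andP[y_ge0 y_le] := equity_val_bounds C_ge0 C_colsum C_acyclic b D_valid p_ge0.
have /andP[c_ge0 c_le1] := self_holding_invmx_1BC_bounds C'_ge0 C'_colsum i a.
have shift_le1 : `|self_holding C' i * invmx (1%:M - C') i a - (i == b)%:R| <= 1.
  by rewrite ler_norml; case: (i == b); rewrite ?mulr1n ?mulr0n; apply/andP; split; lra.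
rewrite 2!normrM (ger0_norm y_ge0) -[leRHS]mulr1.
by apply: ler_pM; rewrite ?mulr_ge0 //; apply: ler_pM.
Qed.
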